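(* Let $(G,\cdot)$ be a group satisfying the descending chain condition on subgroups and the ascending chain condition on normal subgroups (e.g. $G$ finite). Let $\epsilon\in\{1,-1\}$ and $\psi\in\operatorname{End}(G,\cdot)$ with either $\epsilon=-1$ and $\psi([[G,\psi],G])\le Z(G,\cdot)$, or $\epsilon=1$ and $\psi([\psi(G),G])\le Z(G,\cdot)$. Let $g\circ h=g\cdot\psi(g)^{\epsilon}\cdot h\cdot\psi(g)^{-\epsilon}$, let $\nu(g)\in\operatorname{Perm}(G)$ be $h\mapsto g\circ h$, and $N=\{\nu(g):g\in G\}$. Then there is a natural number $n$ such that: (1) $J=\ker(\psi^n)$ is a normal subgroup of both $(G,\cdot)$ and $(G,\circ)$; (2) $I=\psi^n(G)$ is a subgroup of both $(G,\cdot)$ and $(G,\circ)$; (3) $\psi$ restricts to a nilpotent endomorphism of $J$; (4) $\psi$ restricts to an automorphism of $I$; (5) both $(G,\cdot)$ and $(G,\circ)$ are semidirect products of $J$ by $I$; (6) $N$ is the semidirect product of its normal subgroup $\nu(J)$ by $\nu(I)$.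
   Context: $\operatorname{Perm}(G)$ is the group of permutations of the set $G$. For $\psi\in\operatorname{End}(G,\cdot)$, $[g,\psi]=g\cdot\psi(g)^{-1}$ and $[G,\psi]$ is the subgroup generated by these elements. Commutators are $[x,y]=xyx^{-1}y^{-1}$ and $[A,B]$ is the subgroup generated by $[a,b]$, $a\in A$, $b\in B$. $Z(G,\cdot)$ is the centre. $\psi^n$ is the $n$-fold composite of $\psi$; an endomorphism is nilpotent if some power of it is trivial. *)

From Stdlib Require Import Arith.
Set Implicit Arguments.

Definition is_group {T : Type} (mul : T -> T -> T) (inv : T -> T) (one : T) : Prop :=
  (forall x y z, mul (mul x y) z = mul x (mul y z)) /\
  (forall x, mul one x = x) /\ (forall x, mul x one = x) /\
  (forall x, mul (inv x) x = one) /\ (forall x, mul x (inv x) = one).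

Definition subset {T : Type} (A B : T -> Prop) : Prop := forall x, A x -> B x.
Definition setT {T : Type} : T -> Prop := fun _ => True.
Definition image {T U : Type} (f : T -> U) (A : T -> Prop) : U -> Prop :=
  fun y => exists x, A x /\ y = f x.

Definition subgroup {T : Type} (mul : T -> T -> T) (inv : T -> T) (one : T)
  (H : T -> Prop) : Prop :=
  H one /\ (forall x y, H x -> H y -> H (mul x y)) /\ (forall x, H x -> H (inv x)).

Definition normal_subgroup {T : Type} (mul : T -> T -> T) (inv : T -> T) (one : T)
  (H : T -> Prop) : Prop :=
  subgroup mul inv one H /\ (forall g h, H h -> H (mul (mul g h) (inv g))).

Definition gen {T : Type} (mul : T -> T -> T) (inv : T -> T) (one : T)
  (A : T -> Prop) : T -> Prop :=
  fun x => forall H, subgroup mul inv one H -> subset A H -> H x.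

Definition comm {T : Type} (mul : T -> T -> T) (inv : T -> T) (x y : T) : T :=
  mul (mul (mul x y) (inv x)) (inv y).

Definition commsub {T : Type} (mul : T -> T -> T) (inv : T -> T) (one : T)
  (A B : T -> Prop) : T -> Prop :=
  gen mul inv one (fun z => exists a b, A a /\ B b /\ z = comm mul inv a b).

(** [G, psi] = < g * psi(g)^-1 : g in G >. *)
Definition psicomm {T : Type} (mul : T -> T -> T) (inv : T -> T) (one : T)
  (psi : T -> T) : T -> Prop :=
  gen mul inv one (fun z => exists g, z = mul g (inv (psi g))).

Definition center {T : Type} (mul : T -> T -> T) : T -> Prop :=
  fun z => forall x, mul z x = mul x z.

Definition is_endo {T : Type} (mul : T -> T -> T) (psi : T -> T) : Prop :=
  forall x y, psi (mul x y) = mul (psi x) (psi y).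

Definition DCC_subgroups {T : Type} (mul : T -> T -> T) (inv : T -> T) (one : T) : Prop :=
  forall H : nat -> T -> Prop,
    (forall k, subgroup mul inv one (H k)) ->
    (forall k, subset (H (S k)) (H k)) ->
    exists m, forall k, m <= k -> subset (H m) (H k).

Definition ACC_normal {T : Type} (mul : T -> T -> T) (inv : T -> T) (one : T) : Prop :=
  forall H : nat -> T -> Prop,
    (forall k, normal_subgroup mul inv one (H k)) ->
    (forall k, subset (H k) (H (S k))) ->
    exists m, forall k, m <= k -> subset (H k) (H m).

Inductive sign := Pos | Neg.
Definition sopp (s : sign) : sign := match s with Pos => Neg | Neg => Pos end.
Definition spow {T : Type} (inv : T -> T) (s : sign) (x : T) : T :=
  match s with Pos => x | Neg => inv x end.

Definition circ {T : Type} (mul : T -> T -> T) (inv : T -> T) (psi : T -> T)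
  (eps : sign) (g h : T) : T :=
  mul (mul (mul g (spow inv eps (psi g))) h) (spow inv (sopp eps) (psi g)).

(** Used for (G, o) and
    for subgroups of Perm(G) (functions under composition). *)
Definition msubgroup {X : Type} (mul : X -> X -> X) (one : X) (H : X -> Prop) : Prop :=
  H one /\ (forall x y, H x -> H y -> H (mul x y)) /\
  (forall x, H x -> exists y, H y /\ mul x y = one /\ mul y x = one).

Definition mnormal_in {X : Type} (mul : X -> X -> X) (one : X) (S H : X -> Prop) : Prop :=
  forall s h s', S s -> H h -> S s' -> mul s s' = one -> mul s' s = one ->
    H (mul (mul s h) s').

Definition msemidirect {X : Type} (mul : X -> X -> X) (one : X) (S H K : X -> Prop) : Prop :=
  msubgroup mul one S /\ msubgroup mul one H /\ msubgroup mul one K /\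
  subset H S /\ subset K S /\ mnormal_in mul one S H /\
  (forall x, H x -> K x -> x = one) /\
  (forall s, S s -> exists h k, H h /\ K k /\ s = mul h k).

From Stdlib Require Import Arith Lia FunctionalExtensionality.

(** Write [a_g = psi(g)^eps], so that [g o h = g * a_g * h * a_g^-1].  The
    hypothesis on [psi] says exactly that [a_(g o h)] and [a_g * a_h] agree up
    to a central factor; hence conjugation by [a_(g o h)] and by [a_g * a_h]
    coincide, [o] is associative, and [(G, o)] is a group with identity [one].
    Since [psi] commutes with [g |-> a_g], it is an endomorphism of [(G, o)]
    as well as of [(G, mul)].

    The rest is Fitting's lemma, proved once for an arbitrary group [(X, op)]
    and endomorphism [phi]: if both the images and the kernels of the powers
    of [phi] are stable from [n] on (which the chain conditions guarantee),
    then [ker phi^n] and [phi^n(X)] meet trivially and [X] is their semidirect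
    product, [phi] is nilpotent on the kernel and bijective on the image.
    Since the iterates [psi^k] are the same maps for [*] and [o], one index
    [n] serves both groups.  Finally the left regular representation
    [g |-> nu(g)] of [(G, o)] is an injective homomorphism onto [N], and
    transports the semidirect decomposition of [(G, o)] to [N]. *)

Section GroupLaws.
Context {X : Type} {op : X -> X -> X} {iv : X -> X} {e : X}.
Hypothesis Hgrp : is_group op iv e.

Lemma mulA x y z : op (op x y) z = op x (op y z). Proof. apply Hgrp. Qed.
Lemma mul1g x : op e x = x. Proof. apply Hgrp. Qed.
Lemma mulg1 x : op x e = x. Proof. apply Hgrp. Qed.
Lemma mulVg x : op (iv x) x = e. Proof. apply Hgrp. Qed.
Lemma mulgV x : op x (iv x) = e. Proof. apply Hgrp. Qed.

Lemma mulKg x y : op x (op (iv x) y) = y.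
Proof. rewrite <- mulA, mulgV, mul1g. reflexivity. Qed.

Lemma mulVKg x y : op (iv x) (op x y) = y.
Proof. rewrite <- mulA, mulVg, mul1g. reflexivity. Qed.

Lemma mulg_cancel a x y : op a x = op a y -> x = y.
Proof. intros E. rewrite <- (mulVKg a x), E, mulVKg. reflexivity. Qed.

Lemma inv_unique x y : op x y = e -> y = iv x.
Proof. intros E. apply (mulg_cancel x). rewrite E, mulgV. reflexivity. Qed.

Lemma invM x y : iv (op x y) = op (iv y) (iv x).
Proof.
  symmetry. apply inv_unique.
  rewrite mulA, <- (mulA y), mulgV, mul1g, mulgV. reflexivity.
Qed.

Lemma invK x : iv (iv x) = x.
Proof. symmetry. apply inv_unique, mulVg. Qed.

Lemma inv1 : iv e = e.
Proof. symmetry. apply inv_unique, mul1g. Qed.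

Lemma center_mulCA z x y : center op z -> op z (op x y) = op x (op z y).
Proof. intros Hz. rewrite <- mulA, Hz, mulA. reflexivity. Qed.

End GroupLaws.

Lemma group_of_right_inverses {X : Type} (op : X -> X -> X) (iv : X -> X) (e : X) :
  (forall x y z, op (op x y) z = op x (op y z)) ->
  (forall x, op e x = x) -> (forall x, op x e = x) ->
  (forall x, op x (iv x) = e) -> is_group op iv e.
Proof.
  intros HA H1l H1r HV.
  assert (HVV : forall x, iv (iv x) = x).
  { intros x. rewrite <- (H1l (iv (iv x))), <- (HV x), HA, HV, H1r. reflexivity. }
  repeat split; auto.
  intros x. rewrite <- (HVV x) at 2. apply HV.
Qed.

Ltac group_simpl Hg :=
  repeat first [ rewrite (mulA Hg) | rewrite (invM Hg) | rewrite (invK Hg)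
               | rewrite (inv1 Hg) | rewrite (mulKg Hg) | rewrite (mulVKg Hg)
               | rewrite (mulgV Hg) | rewrite (mulVg Hg) | rewrite (mul1g Hg)
               | rewrite (mulg1 Hg) ].

Section Endomorphisms.
Context {X : Type} {op : X -> X -> X} {iv : X -> X} {e : X} {f : X -> X}.
Hypothesis Hgrp : is_group op iv e.
Hypothesis Hf : is_endo op f.

Lemma endo1 : f e = e.
Proof. apply (mulg_cancel Hgrp (f e)). rewrite <- Hf, !(mulg1 Hgrp). reflexivity. Qed.

Lemma endoV x : f (iv x) = iv (f x).
Proof. apply (inv_unique Hgrp). rewrite <- Hf, (mulgV Hgrp). apply endo1. Qed.

Lemma kernel_normal : normal_subgroup op iv e (fun x => f x = e).
Proof.
  split; [split; [|split]|].
  - apply endo1.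
  - intros x y Hx Hy. rewrite Hf, Hx, Hy. apply (mul1g Hgrp).
  - intros x Hx. rewrite endoV, Hx. apply (inv1 Hgrp).
  - intros g h Hh. rewrite !Hf, endoV, Hh, (mulg1 Hgrp). apply (mulgV Hgrp).
Qed.

Lemma image_subgroup : subgroup op iv e (image f setT).
Proof.
  split; [|split].
  - exists e. split; [exact I | symmetry; apply endo1].
  - intros x y [a [_ ->]] [b [_ ->]]. exists (op a b). split; [exact I | symmetry; apply Hf].
  - intros x [a [_ ->]]. exists (iv a). split; [exact I | symmetry; apply endoV].
Qed.

End Endomorphisms.

Ltac group_simpl_endo Hg Hf :=
  repeat first [ rewrite Hf | rewrite (endoV Hg Hf) | rewrite (endo1 Hg Hf)
               | progress group_simpl Hg ].

Lemma iter_endo {X : Type} {op : X -> X -> X} {f : X -> X} :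
  is_endo op f -> forall k, is_endo op (Nat.iter k f).
Proof. intros Hf k. induction k as [|k IH]; intros x y; simpl; [|rewrite IH]; auto. Qed.

Section Semidirect.
Context {X : Type} {op : X -> X -> X} {iv : X -> X} {e : X}.
Hypothesis Hgrp : is_group op iv e.

Lemma subgroup_msubgroup H : subgroup op iv e H -> msubgroup op e H.
Proof.
  intros [H1 [HM HV]]. split; [exact H1 | split; [exact HM|]].
  intros x Hx. exists (iv x). split; [auto | split; [apply (mulgV Hgrp) | apply (mulVg Hgrp)]].
Qed.

Lemma gen_base (A : X -> Prop) x : A x -> gen op iv e A x.
Proof. intros Ax H _ Hs. apply Hs, Ax. Qed.

Lemma gen_inv (A : X -> Prop) x : A x -> gen op iv e A (iv x).
Proof. intros Ax H [_ [_ HV]] Hs. apply HV, Hs, Ax. Qed.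

(** A normal subgroup is normalised by every element, whose inverse in the
    sense of [mnormal_in] is necessarily its group inverse. *)
Lemma normal_mnormal H : normal_subgroup op iv e H -> mnormal_in op e setT H.
Proof.
  intros [_ Hn] s h s' _ Hh _ Hss _.
  rewrite (inv_unique Hgrp s s' Hss). apply Hn, Hh.
Qed.

Lemma semidirect_intro H K :
  normal_subgroup op iv e H -> subgroup op iv e K ->
  (forall x, H x -> K x -> x = e) ->
  (forall s, exists h k, H h /\ K k /\ s = op h k) ->
  msemidirect op e setT H K.
Proof.
  intros HH HK Htriv Hprod.
  split; [apply subgroup_msubgroup; split; [exact I | split; intros; exact I]|].
  split; [apply subgroup_msubgroup, HH|].
  split; [apply subgroup_msubgroup, HK|].
  split; [intros x _; exact I|].
  split; [intros x _; exact I|].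
  split; [apply normal_mnormal, HH|].
  split; [exact Htriv|].
  intros s _. apply Hprod.
Qed.

End Semidirect.

Lemma msemidirect_image {X Y : Type} (op : X -> X -> X) (e : X)
  (op' : Y -> Y -> Y) (e' : Y) (f : X -> Y) :
  (forall a b, f (op a b) = op' (f a) (f b)) -> f e = e' ->
  (forall a b, f a = f b -> a = b) ->
  forall S H K, msemidirect op e S H K ->
  msemidirect op' e' (image f S) (image f H) (image f K).
Proof.
  intros Hmul H1 Hinj.
  assert (Hsub : forall A, msubgroup op e A -> msubgroup op' e' (image f A)).
  { intros A [A1 [AM AV]]. split; [|split].
    - exists e. auto.
    - intros x y [a [Ha ->]] [b [Hb ->]]. exists (op a b). auto.
    - intros x [a [Ha ->]]. destruct (AV a Ha) as [b [Hb [E1 E2]]].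
      exists (f b). split; [exists b; auto|]. rewrite <- !Hmul, E1, E2. auto. }
  assert (Hinc : forall A B, subset A B -> subset (image f A) (image f B)).
  { intros A B HAB y [a [Ha ->]]. exists a. auto. }
  intros S H K [HS [HH [HK [HSH [HSK [Hn [Htriv Hprod]]]]]]].
  split; [auto|]. split; [auto|]. split; [auto|].
  split; [auto|]. split; [auto|]. split; [|split].
  - intros s h s' [a [Sa ->]] [j [Hj ->]] [b [Sb ->]] E1 E2.
    rewrite <- Hmul, <- H1 in E1, E2.
    exists (op (op a j) b). rewrite !Hmul.
    split; [apply Hn; auto using Hinj | reflexivity].
  - intros x [a [Ha ->]] [b [Kb E]]. rewrite (Htriv a Ha); [exact H1|].
    rewrite (Hinj _ _ E). exact Kb.
  - intros s [a [Sa ->]]. destruct (Hprod a Sa) as [h [k [Hh [Kk ->]]]].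
    exists (f h), (f k). split; [exists h; auto|]. split; [exists k; auto|]. apply Hmul.
Qed.

(** The left regular representation of a group is an injective homomorphism
    into the functions under composition, hence preserves semidirect products. *)
Lemma left_regular_semidirect {X : Type} {op : X -> X -> X} {iv : X -> X} {e : X}
  (Hgrp : is_group op iv e) H K :
  msemidirect op e setT H K ->
  msemidirect (fun f g : X -> X => fun x => f (g x)) (fun x : X => x)
    (image (fun g h => op g h) setT) (image (fun g h => op g h) H)
    (image (fun g h => op g h) K).
Proof.
  apply msemidirect_image.
  - intros a b. apply functional_extensionality. intros x. apply (mulA Hgrp).
  - apply functional_extensionality. apply (mul1g Hgrp).
  - intros a b E. pose proof (f_equal (fun f => f e) E) as Ee. simpl in Ee.
    rewrite !(mulg1 Hgrp) in Ee. exact Ee.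
Qed.

(** ** Fitting's lemma *)

Definition images_stable {X : Type} (f : X -> X) (n : nat) : Prop :=
  forall k x, n <= k -> exists y, Nat.iter n f x = Nat.iter k f y.

Definition kernels_stable {X : Type} (e : X) (f : X -> X) (n : nat) : Prop :=
  forall k x, n <= k -> Nat.iter k f x = e -> Nat.iter n f x = e.

Section ChainConditions.
Context {X : Type} {op : X -> X -> X} {iv : X -> X} {e : X} {f : X -> X}.
Hypothesis Hgrp : is_group op iv e.
Hypothesis Hf : is_endo op f.

Lemma images_stable_of_DCC : DCC_subgroups op iv e -> exists n, images_stable f n.
Proof.
  intros Hdcc.
  destruct (Hdcc (fun k => image (Nat.iter k f) setT)) as [m Hm].
  - intros k. apply (image_subgroup Hgrp (iter_endo Hf k)).
  - intros k x [a [_ ->]]. exists (f a). split; [exact I | apply Nat.iter_succ_r].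
  - exists m. intros k x Hk.
    destruct (Hm k Hk (Nat.iter m f x)) as [y [_ Hy]]; [exists x; split; [exact I|reflexivity]|].
    exists y. exact Hy.
Qed.

Lemma kernels_stable_of_ACC : ACC_normal op iv e -> exists n, kernels_stable e f n.
Proof.
  intros Hacc.
  destruct (Hacc (fun k x => Nat.iter k f x = e)) as [m Hm].
  - intros k. apply (kernel_normal Hgrp (iter_endo Hf k)).
  - intros k x Hx. simpl. rewrite Hx. apply (endo1 Hgrp Hf).
  - exists m. intros k x Hk. apply Hm, Hk.
Qed.

Lemma images_stable_mono m n : m <= n -> images_stable f m -> images_stable f n.
Proof.
  intros Hmn Hm k x Hk.
  destruct (Hm (k - (n - m)) x ltac:(lia)) as [y Hy]. exists y.
  replace (Nat.iter n f x) with (Nat.iter (n - m) f (Nat.iter m f x))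
    by (rewrite <- Nat.iter_add; f_equal; lia).
  rewrite Hy, <- Nat.iter_add. f_equal. lia.
Qed.

Lemma kernels_stable_mono m n : m <= n -> kernels_stable e f m -> kernels_stable e f n.
Proof.
  intros Hmn Hm k x Hk Hx.
  replace n with ((n - m) + m) by lia.
  rewrite Nat.iter_add, (Hm k x ltac:(lia) Hx).
  apply (endo1 Hgrp (iter_endo Hf _)).
Qed.

Lemma exists_fitting_index :
  DCC_subgroups op iv e -> ACC_normal op iv e ->
  exists n, images_stable f n /\ kernels_stable e f n.
Proof.
  intros Hdcc Hacc.
  destruct images_stable_of_DCC as [m1 Hm1]; [exact Hdcc|].
  destruct kernels_stable_of_ACC as [m2 Hm2]; [exact Hacc|].
  exists (m1 + m2). split.
  - apply (images_stable_mono m1); [lia | exact Hm1].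
  - apply (kernels_stable_mono m2); [lia | exact Hm2].
Qed.

End ChainConditions.

Section Fitting.
Context {X : Type} {op : X -> X -> X} {iv : X -> X} {e : X} {f : X -> X}.
Hypothesis Hgrp : is_group op iv e.
Hypothesis Hf : is_endo op f.
Variable n : nat.
Hypothesis Himg : images_stable f n.
Hypothesis Hker : kernels_stable e f n.

Lemma fitting_kernel_invariant :
  subset (image f (fun x => Nat.iter n f x = e)) (fun x => Nat.iter n f x = e).
Proof. intros x [y [Hy ->]]. rewrite Nat.iter_swap, Hy. apply (endo1 Hgrp Hf). Qed.

Lemma fitting_image_invariant :
  subset (image f (image (Nat.iter n f) setT)) (image (Nat.iter n f) setT).
Proof.
  intros x [y [[z [_ ->]] ->]]. exists (f z). split; [exact I|].
  symmetry. apply Nat.iter_swap.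
Qed.

Lemma fitting_trivial_intersection x :
  Nat.iter n f x = e -> image (Nat.iter n f) setT x -> x = e.
Proof.
  intros Hx [y [_ ->]]. apply (Hker (n + n)); [lia|].
  rewrite Nat.iter_add. exact Hx.
Qed.

Lemma fitting_product s : exists j i,
  Nat.iter n f j = e /\ image (Nat.iter n f) setT i /\ s = op j i.
Proof.
  destruct (Himg (n + n) s ltac:(lia)) as [y Hy]. rewrite Nat.iter_add in Hy.
  exists (op s (iv (Nat.iter n f y))), (Nat.iter n f y). split; [|split].
  - rewrite (iter_endo Hf), (endoV Hgrp (iter_endo Hf n)), Hy. apply (mulgV Hgrp).
  - exists y. split; [exact I | reflexivity].
  - group_simpl Hgrp. reflexivity.
Qed.

Lemma fitting_semidirect :
  msemidirect op e setT (fun x => Nat.iter n f x = e) (image (Nat.iter n f) setT).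
Proof.
  apply (semidirect_intro Hgrp).
  - apply (kernel_normal Hgrp (iter_endo Hf n)).
  - apply (image_subgroup Hgrp (iter_endo Hf n)).
  - exact fitting_trivial_intersection.
  - exact fitting_product.
Qed.

(** [f] is injective on [f^n(X)]: a quotient of two elements with the same
    image lies in [ker f^(n+1) = ker f^n], hence in the trivial intersection. *)
Lemma fitting_injective x y :
  image (Nat.iter n f) setT x -> image (Nat.iter n f) setT y -> f x = f y -> x = y.
Proof.
  intros Hx Hy E.
  assert (Hd : op x (iv y) = e).
  { apply fitting_trivial_intersection.
    - apply (Hker (S n)); [lia|].
      rewrite Nat.iter_succ_r, Hf, (endoV Hgrp Hf), E, (mulgV Hgrp).
      apply (endo1 Hgrp (iter_endo Hf n)).
    - destruct (image_subgroup Hgrp (iter_endo Hf n)) as [_ [HM HV]]. auto. }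
  rewrite <- (invK Hgrp x), <- (inv_unique Hgrp _ _ Hd), (invK Hgrp). reflexivity.
Qed.

(** [f] maps [f^n(X)] onto itself, since [f^n(X) = f^(n+1)(X)]. *)
Lemma fitting_surjective :
  subset (image (Nat.iter n f) setT) (image f (image (Nat.iter n f) setT)).
Proof.
  intros x [z [_ ->]]. destruct (Himg (S n) z ltac:(lia)) as [y ->].
  exists (Nat.iter n f y). split; [exists y; split; [exact I | reflexivity]|].
  apply Nat.iter_succ.
Qed.

End Fitting.

(** ** The circle operation *)

(** [twist g = a_g = psi(g)^eps], the element by which [g o -] conjugates. *)
Definition twist {T : Type} (inv : T -> T) (psi : T -> T) (eps : sign) (g : T) : T :=
  spow inv eps (psi g).

Definition circ_inv {T : Type} (mul : T -> T -> T) (inv : T -> T) (psi : T -> T)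
  (eps : sign) (g : T) : T :=
  mul (inv (twist inv psi eps g)) (mul (inv g) (twist inv psi eps g)).

Section CircleGroup.
Context {T : Type} {mul : T -> T -> T} {inv : T -> T} {one : T} {psi : T -> T}.
Variable eps : sign.
Hypothesis Hg : is_group mul inv one.
Hypothesis Hpsi : is_endo mul psi.
Local Notation a := (twist inv psi eps).
Local Notation circ_op := (circ mul inv psi eps).

Lemma circ_conj g h : circ_op g h = mul g (mul (a g) (mul h (inv (a g)))).
Proof. unfold circ, twist. destruct eps; simpl; group_simpl Hg; reflexivity. Qed.

Lemma twist1 : a one = one.
Proof. unfold twist. rewrite (endo1 Hg Hpsi). destruct eps; simpl; group_simpl Hg; reflexivity. Qed.

(** [psi] commutes with [g |-> a_g], hence is an endomorphism of [(G, o)]. *)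
Lemma circ_endo : is_endo circ_op psi.
Proof.
  intros g h. rewrite !circ_conj, !Hpsi, (endoV Hg Hpsi).
  replace (psi (a g)) with (a (psi g)); [reflexivity|].
  unfold twist. destruct eps; simpl; [reflexivity | symmetry; apply (endoV Hg Hpsi)].
Qed.

Hypothesis Hcentral :
  (eps = Neg /\
    subset (image psi (commsub mul inv one (psicomm mul inv one psi) setT))
           (center mul)) \/
  (eps = Pos /\
    subset (image psi (commsub mul inv one (image psi setT) setT))
           (center mul)).

(** The central hypothesis: [a_(g o h) = a_g a_h z] for a central [z]; the
    defect [z] is [psi] of a commutator [[g psi(g)^-1, h]^-1] when [eps = -1],
    of [[psi(g), h^-1]^-1] when [eps = 1]. *)
Lemma twist_circ g h :
  exists z, center mul z /\ a (circ_op g h) = mul (a g) (mul (a h) z).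
Proof.
  destruct Hcentral as [[Heps Hc] | [Heps Hc]]; rewrite Heps in *.
  - set (u := mul g (inv (psi g))).
    exists (psi (inv (comm mul inv u h))). split.
    + apply Hc. eexists; split; [|reflexivity].
      apply gen_inv. exists u, h. split; [|split; [exact I | reflexivity]].
      apply gen_base. exists g. reflexivity.
    + unfold twist, circ, comm, u; simpl. group_simpl_endo Hg Hpsi. reflexivity.
  - exists (psi (inv (comm mul inv (psi g) (inv h)))). split.
    + apply Hc. eexists; split; [|reflexivity].
      apply gen_inv. exists (psi g), (inv h). split; [|split; [exact I | reflexivity]].
      exists g. split; [exact I | reflexivity].
    + unfold twist, circ, comm; simpl. group_simpl_endo Hg Hpsi. reflexivity.
Qed.

Lemma circ_assoc g h k : circ_op (circ_op g h) k = circ_op g (circ_op h k).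
Proof.
  rewrite (circ_conj (circ_op g h) k).
  destruct (twist_circ g h) as [z [Hz ->]].
  rewrite !circ_conj. group_simpl Hg.
  rewrite (center_mulCA Hg z _ _ Hz). group_simpl Hg. reflexivity.
Qed.

Lemma circ_group : is_group circ_op (circ_inv mul inv psi eps) one.
Proof.
  apply group_of_right_inverses.
  - exact circ_assoc.
  - intros g. rewrite circ_conj, twist1. group_simpl Hg. reflexivity.
  - intros g. rewrite circ_conj. group_simpl Hg. reflexivity.
  - intros g. rewrite circ_conj. unfold circ_inv. group_simpl Hg. reflexivity.
Qed.

End CircleGroup.

Theorem mainTheorem5 (T : Type) (mul : T -> T -> T) (inv : T -> T) (one : T)
  (psi : T -> T) (eps : sign) :
  is_group mul inv one ->
  DCC_subgroups mul inv one ->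
  ACC_normal mul inv one ->
  is_endo mul psi ->
  ((eps = Neg /\
    subset (image psi (commsub mul inv one (psicomm mul inv one psi) setT))
           (center mul)) \/
   (eps = Pos /\
    subset (image psi (commsub mul inv one (image psi setT) setT))
           (center mul))) ->
  exists n : nat,
    let J : T -> Prop := fun g => Nat.iter n psi g = one in
    let I : T -> Prop := image (Nat.iter n psi) setT in
    let o := circ mul inv psi eps in
    let nu : T -> (T -> T) := fun g => fun h => o g h in
    let N : (T -> T) -> Prop := image nu setT in
    (* (1) *)
    (normal_subgroup mul inv one J /\
     msubgroup o one J /\ mnormal_in o one setT J) /\
    (* (2) *)
    (subgroup mul inv one I /\ msubgroup o one I) /\
    (* (3) *)
    (subset (image psi J) J /\
     exists m : nat, forall x, J x -> Nat.iter m psi x = one) /\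
    (* (4) *)
    (subset (image psi I) I /\
     (forall x y, I x -> I y -> psi x = psi y -> x = y) /\
     subset I (image psi I)) /\
    (* (5) *)
    (msemidirect mul one setT J I /\ msemidirect o one setT J I) /\
    (* (6) *)
    msemidirect (fun f g : T -> T => fun x => f (g x)) (fun x : T => x)
      N (image nu J) (image nu I).
Proof.
  intros Hg Hdcc Hacc Hpsi Hcentral.
  pose proof (circ_group eps Hg Hpsi Hcentral) as Hgo.
  pose proof (circ_endo eps Hg Hpsi) as Hpsio.
  destruct (exists_fitting_index Hg Hpsi Hdcc Hacc) as [n [Himg Hker]].
  exists n. intros J I o nu N.
  pose proof (kernel_normal Hgo (iter_endo Hpsio n)) as HJo.
  pose proof (image_subgroup Hgo (iter_endo Hpsio n)) as HIo.
  pose proof (fitting_semidirect Hgo Hpsio n Himg Hker) as Hsdo.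
  split; [split; [exact (kernel_normal Hg (iter_endo Hpsi n))|] |].
  { split; [apply (subgroup_msubgroup Hgo), HJo | apply (normal_mnormal Hgo), HJo]. }
  split; [split; [exact (image_subgroup Hg (iter_endo Hpsi n)) |
                  apply (subgroup_msubgroup Hgo), HIo]|].
  split; [split; [exact (fitting_kernel_invariant Hg Hpsi n) | exists n; auto]|].
  split; [split; [exact (fitting_image_invariant n) |
                  split; [exact (fitting_injective Hg Hpsi n Hker) |
                          exact (fitting_surjective n Himg)]]|].
  split; [split; [exact (fitting_semidirect Hg Hpsi n Himg Hker) | exact Hsdo]|].
  exact (left_regular_semidirect Hgo _ _ Hsdo).
Qed.
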